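(* Let $\chi:\mathfrak{g}\to W_1^*\otimes\cdots\otimes W_n^*$ and $\varphi:\mathfrak{h}\to V_1^*\otimes\cdots\otimes V_m^*$ be factorization structures, and $T\subset\chi(\mathfrak{g})$, $S\subset\varphi(\mathfrak{h})$ 1-dimensional subspaces; consider the product $P=\varphi(\mathfrak{h})\otimes T+S\otimes\chi(\mathfrak{g})\subset V_1^*\otimes\cdots\otimes V_m^*\otimes W_1^*\otimes\cdots\otimes W_n^*$. Then for 1-dimensional subspaces $I\subset V_1^*\otimes\cdots\otimes V_m^*$ and $K\subset W_1^*\otimes\cdots\otimes W_n^*$ we have $I\otimes K\subset P$ if and only if either ($I=S$ and $K\subset\chi(\mathfrak{g})$) or ($K=T$ and $I\subset\varphi(\mathfrak{h})$).
   Context: All spaces are real or complex; $V_i,W_i$ are 2-dimensional. A factorization structure of dimension $m$ is an injective linear map $\varphi:\mathfrak{h}\to V_1^*\otimes\cdots\otimes V_m^*$ with $\dim\mathfrak{h}=m+1$ such that $\dim(\varphi(\mathfrak{h})\cap V_1^*\otimes\cdots\otimes\ell^0\otimes\cdots\otimes V_m^* )=1$ (with $\ell^0$, the annihilator of $\ell$, in the $j$-th slot) for every $j$ and all $\ell$ in a nonempty Zariski-open subset of $\mathbb{P}(V_j)$. The subspace $P$ is (the image of) the product factorization structure of $\varphi$ and $\chi$. *)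

From HB Require Import structures.
From mathcomp Require Import all_boot all_order all_algebra.
From mathcomp Require Import mpoly.
Set Implicit Arguments. Unset Strict Implicit. Unset Printing Implicit Defensive.
Import Order.TTheory GRing.Theory Num.Theory.
Local Open Scope ring_scope.

(* Every V_i is the 2-dimensional coordinate space F^2 (vectors 'I_2 -> F);
   V_i^* is identified with F^2 through the dual basis, the pairing being
   alpha(v) = alpha_0 v_0 + alpha_1 v_1. *)

Section Tensors.
Variable F : fieldType.

Definition Dual2 := {ffun 'I_2 -> F^o}.

Definition Tens (m : nat) := {ffun {ffun 'I_m -> 'I_2} -> F^o}.

Definition dbasis (k : 'I_2) : Dual2 := [ffun k' => (k == k')%:R].

Definition etens (m : nat) (a : 'I_m -> Dual2) : Tens m :=
  [ffun s : {ffun 'I_m -> 'I_2} => \prod_(i < m) a i (s i)].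

Definition pairing (v : 'I_2 -> F) (alpha : Dual2) : F^o :=
  \sum_(k < 2) alpha k * v k.
Definition annih (v : 'I_2 -> F) : {vspace Dual2} :=
  lker (linfun (pairing v)).

(* V_1^* (x) ... (x) l^0 (x) ... (x) V_m^*, with l^0 in the j-th slot:
   spanned by elementary tensors with a basis vector of l^0 in slot j and
   standard basis vectors in the other slots. *)
Definition slot_sub (m : nat) (j : 'I_m) (v : 'I_2 -> F) : {vspace Tens m} :=
  <<[seq etens (fun i => if i == j then a else dbasis (s i))
     | s : {ffun 'I_m -> 'I_2} <- enum {ffun 'I_m -> 'I_2}, a <- vbasis (annih v)]>>%VS.

(* Zariski topology on P(V_j) = P^1 : closed sets are common zero loci of
   families of homogeneous polynomials in the two coordinates. *)
Definition zclosed_pt (S : {mpoly F[2]} -> Prop) (v : 'I_2 -> F) : Prop :=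
  forall p, S p -> p.@[v] = 0.

(* "the property Q holds for all l in a nonempty Zariski-open subset of P(V)"
   (a line l is represented by a nonzero spanning vector v) *)
Definition on_nonempty_zopen (Q : ('I_2 -> F) -> Prop) : Prop :=
  exists S : {mpoly F[2]} -> Prop,
    (forall p, S p -> p \is homog mdeg) /\
    (exists v : 'I_2 -> F, (exists k, v k != 0) /\ ~ zclosed_pt S v) /\
    (forall v : 'I_2 -> F, (exists k, v k != 0) -> ~ zclosed_pt S v -> Q v).

Definition fact_struct (m : nat) (hT : vectType F) (phi : 'Hom(hT, Tens m)) :
  Prop :=
  [/\ \dim (fullv : {vspace hT}) = m.+1,
      lker phi = 0%VS &
      forall j : 'I_m, on_nonempty_zopen
        (fun v => \dim (limg phi :&: slot_sub j v) = 1%N)].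

Definition tens (m n : nat) (a : Tens m) (b : Tens n) : Tens (m + n) :=
  [ffun s : {ffun 'I_(m + n) -> 'I_2} => a [ffun i => s (lshift n i)] * b [ffun i => s (rshift m i)]].

Definition tens_sp (m n : nat) (U : {vspace Tens m}) (W : {vspace Tens n}) :
  {vspace Tens (m + n)} :=
  <<[seq tens a b | a <- vbasis U, b <- vbasis W]>>%VS.

End Tensors.

From HB Require Import structures.
From mathcomp Require Import all_boot all_order all_algebra.
From mathcomp Require Import mpoly.
Import Order.TTheory GRing.Theory Num.Theory.
Local Open Scope ring_scope.

(* Write a (x) b = x + y with x in phi(h) (x) T and y in S (x) chi(g).  Contracting the
   first factor with a linear form f (the map f (x) id) sends a (x) b to f(a) b, x into T
   and y into chi(g); taking f(a) = 1 gives b in chi(g), and if a is not in S we may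
   also take f to vanish on S, which kills y and gives b in T.  Contracting the second
   factor likewise gives a in phi(h). *)

Set Implicit Arguments.
Unset Strict Implicit.

Section TensorContraction.
Variables (F : fieldType) (m n : nat).

Definition tjoin (s : {ffun 'I_m -> 'I_2}) (r : {ffun 'I_n -> 'I_2}) :
  {ffun 'I_(m + n) -> 'I_2} :=
  [ffun i => match split i with inl j => s j | inr k => r k end].

Lemma tjoin_lshift s r : [ffun i => tjoin s r (lshift n i)] = s.
Proof. by apply/ffunP=> i; rewrite !ffunE (unsplitK (inl _ i)). Qed.

Lemma tjoin_rshift s r : [ffun i => tjoin s r (rshift m i)] = r.
Proof. by apply/ffunP=> i; rewrite !ffunE (unsplitK (inr _ i)). Qed.

Definition tensl (y : Tens F n) (x : Tens F m) := tens x y.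
Definition tensr (x : Tens F m) (y : Tens F n) := tens x y.

Fact tensl_is_linear y : linear (tensl y).
Proof. by move=> c x1 x2; apply/ffunP=> s; rewrite !ffunE mulrDl scalerAl. Qed.
HB.instance Definition _ y :=
  GRing.isLinear.Build F (Tens F m) (Tens F (m + n)) _ (tensl y)
    (tensl_is_linear y).

Fact tensr_is_linear x : linear (tensr x).
Proof. by move=> c y1 y2; apply/ffunP=> s; rewrite !ffunE mulrDr scalerAr. Qed.
HB.instance Definition _ x :=
  GRing.isLinear.Build F (Tens F n) (Tens F (m + n)) _ (tensr x)
    (tensr_is_linear x).

Definition lcontract (f : 'Hom(Tens F m, F^o)) (z : Tens F (m + n)) : Tens F n :=
  [ffun r => f [ffun s => z (tjoin s r)]].
Definition rcontract (g : 'Hom(Tens F n, F^o)) (z : Tens F (m + n)) : Tens F m :=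
  [ffun s => g [ffun r => z (tjoin s r)]].

Fact lcontract_is_linear f : linear (lcontract f).
Proof.
move=> c z1 z2; apply/ffunP=> r; rewrite !ffunE -linearP.
by congr (f _); apply/ffunP=> s; rewrite !ffunE.
Qed.
HB.instance Definition _ f :=
  GRing.isLinear.Build F (Tens F (m + n)) (Tens F n) _ (lcontract f)
    (lcontract_is_linear f).

Fact rcontract_is_linear g : linear (rcontract g).
Proof.
move=> c z1 z2; apply/ffunP=> s; rewrite !ffunE -linearP.
by congr (g _); apply/ffunP=> r; rewrite !ffunE.
Qed.
HB.instance Definition _ g :=
  GRing.isLinear.Build F (Tens F (m + n)) (Tens F m) _ (rcontract g)
    (rcontract_is_linear g).

Lemma lcontract_tens f x y : lcontract f (tens x y) = f x *: y.
Proof.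
apply/ffunP=> r; rewrite !ffunE -[RHS]/(f x * y r) mulrC -[_ * f x]/(y r *: f x).
rewrite -linearZ; congr (f _); apply/ffunP=> s.
by rewrite !ffunE tjoin_lshift tjoin_rshift mulrC.
Qed.

Lemma rcontract_tens g x y : rcontract g (tens x y) = g y *: x.
Proof.
apply/ffunP=> s; rewrite !ffunE -[RHS]/(g y * x s) mulrC -[_ * g y]/(x s *: g y).
rewrite -linearZ; congr (g _); apply/ffunP=> r.
by rewrite !ffunE tjoin_lshift tjoin_rshift.
Qed.

End TensorContraction.

Section TensorSpan.
Variables (F : fieldType) (m n : nat).
Implicit Types (U : {vspace Tens F m}) (W : {vspace Tens F n}).
Implicit Types (f : 'Hom(Tens F m, F^o)) (g : 'Hom(Tens F n, F^o)).

Lemma memv_tens U W u w : u \in U -> w \in W -> tens u w \in tens_sp U W.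
Proof.
move=> uU wW; rewrite (coord_vbasis uU) -[tens _ _]/(tensl w _) linear_sum.
apply: memv_suml => i _; rewrite linearZ memvZ //= /tensl.
rewrite (coord_vbasis wW) -[tens _ _]/(tensr _ _) linear_sum.
apply: memv_suml => j _; rewrite linearZ memvZ // memv_span //.
by apply: allpairs_f; apply: mem_nth; rewrite size_tuple.
Qed.

Lemma tens_spS U1 U2 W1 W2 :
  (U1 <= U2)%VS -> (W1 <= W2)%VS -> (tens_sp U1 W1 <= tens_sp U2 W2)%VS.
Proof.
move=> sU12 sW12; apply/span_subvP => _ /allpairsP[[u w] /= [uU wW ->]].
by apply: memv_tens; [apply: (subvP sU12) | apply: (subvP sW12)];
  apply: vbasis_mem.
Qed.

Lemma linear_tens_sp_sub (wT : vectType F) (h : {linear Tens F (m + n) -> wT})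
    U W (V : {vspace wT}) :
    (forall u w, u \in U -> w \in W -> h (tens u w) \in V) ->
  forall z, z \in tens_sp U W -> h z \in V.
Proof.
move=> hUW z zUW; rewrite (coord_span (X := in_tuple _) zUW) linear_sum.
apply: memv_suml => i _; rewrite linearZ memvZ //.
have /allpairsP[[u w] /= [uU wW ->]] := mem_nth 0 (ltn_ord i).
by apply: hUW; apply: vbasis_mem.
Qed.

Lemma lcontract_tens_sp f U W z : z \in tens_sp U W -> lcontract f z \in W.
Proof. by apply: linear_tens_sp_sub => u w _ wW; rewrite /= lcontract_tens memvZ. Qed.

Lemma lcontract_tens_sp_eq0 f U W z :
  {in U, forall u, f u = 0} -> z \in tens_sp U W -> lcontract f z = 0.
Proof.
move=> fU0 zUW; apply/eqP; rewrite -memv0; move: z zUW.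
apply: linear_tens_sp_sub => u w uU _.
by rewrite /= lcontract_tens fU0 // scale0r mem0v.
Qed.

Lemma rcontract_tens_sp g U W z : z \in tens_sp U W -> rcontract g z \in U.
Proof. by apply: linear_tens_sp_sub => u w uU _; rewrite /= rcontract_tens memvZ. Qed.

End TensorSpan.

Section Lines.
Variables (F : fieldType) (vT : vectType F).
Implicit Types (U V : {vspace vT}) (a : vT).

Lemma lform_separates U a :
  a \notin U -> exists f : 'Hom(vT, F^o), {in U, forall u, f u = 0} /\ f a = 1.
Proof.
move=> aU; pose X := [tuple of a :: vbasis U].
have freeX : free X.
  rewrite /= free_cons (basis_free (vbasisP U)) andbT.
  by case/andP: (vbasisP U) => /eqP ->.
exists (linfun (coord X ord0 : vT -> F^o)); split; last first.
  by rewrite lfunE /= (coord_free ord0 ord0 freeX).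
move=> u uU; rewrite lfunE /= (coord_vbasis uU) linear_sum big1 // => i _.
by rewrite linearZ /= -[(vbasis U)`_i]/(X`_(lift ord0 i)) coord_free // mulr0.
Qed.

Lemma dimv1_vpick U : \dim U = 1%N -> U = <[vpick U]>%VS.
Proof.
move=> dimU1; have nzU : vpick U != 0 by rewrite vpick0 -dimv_eq0 dimU1.
by apply/esym/eqP; rewrite eqEdim -memvE memv_pick dim_vline nzU dimU1.
Qed.

Lemma dimv1_eq U V : \dim U = 1%N -> \dim V = 1%N -> (U <= V)%VS -> U = V.
Proof. by move=> dU dV sUV; apply/eqP; rewrite eqEdim sUV dU dV. Qed.

End Lines.

Lemma tens_in_sum_tens_sp (F : fieldType) m n (A S : {vspace Tens F m})
    (B T : {vspace Tens F n}) (a : Tens F m) (b : Tens F n) :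
    (S <= A)%VS -> (T <= B)%VS -> a != 0 -> b != 0 ->
    tens a b \in (tens_sp A T + tens_sp S B)%VS ->
  (a \in S /\ b \in B) \/ (b \in T /\ a \in A).
Proof.
move=> sSA sTB a0 b0 /memv_addP[x xAT [y ySB def_ab]].
have lcontract_ab (f : 'Hom(Tens F m, F^o)) : f a = 1 -> lcontract f (x + y) = b.
  by move=> fa; rewrite -def_ab lcontract_tens fa scale1r.
have rcontract_ab (g : 'Hom(Tens F n, F^o)) : g b = 1 -> rcontract g (x + y) = a.
  by move=> gb; rewrite -def_ab rcontract_tens gb scale1r.
have [aS | aS] := boolP (a \in S).
  have /lform_separates[f [_ fa]] : a \notin (0 : {vspace Tens F m})%VS.
    by rewrite memv0.
  left; split=> //; rewrite -(lcontract_ab f fa) linearD.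
  by rewrite memvD ?(lcontract_tens_sp _ ySB) ?(subvP sTB)
    ?(lcontract_tens_sp _ xAT).
have [f [fS0 fa]] := lform_separates aS.
have /lform_separates[g [_ gb]] : b \notin (0 : {vspace Tens F n})%VS.
  by rewrite memv0.
right; split.
  rewrite -(lcontract_ab f fa) linearD /= (lcontract_tens_sp_eq0 fS0 ySB) addr0.
  exact: lcontract_tens_sp xAT.
rewrite -(rcontract_ab g gb) linearD.
by rewrite memvD ?(rcontract_tens_sp _ xAT) ?(subvP sSA) ?(rcontract_tens_sp _ ySB).
Qed.

Theorem lemma1p11 (F : numFieldType) (m n : nat)
  (hT gT : vectType F)
  (phi : 'Hom(hT, Tens F m)) (chi : 'Hom(gT, Tens F n))
  (Hphi : fact_struct phi) (Hchi : fact_struct chi)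
  (S : {vspace Tens F m}) (T : {vspace Tens F n})
  (HS : \dim S = 1%N) (HSphi : (S <= limg phi)%VS)
  (HT : \dim T = 1%N) (HTchi : (T <= limg chi)%VS)
  (I : {vspace Tens F m}) (K : {vspace Tens F n})
  (HI : \dim I = 1%N) (HK : \dim K = 1%N) :
  let P := (tens_sp (limg phi) T + tens_sp S (limg chi))%VS in
  (tens_sp I K <= P)%VS <->
  ((I = S /\ (K <= limg chi)%VS) \/ (K = T /\ (I <= limg phi)%VS)).
Proof.
move=> P; split=> [sIK_P | [[-> sKB] | [-> sIA]]]; last first.
- exact: subv_trans (tens_spS sIA (subvv T)) (addvSl _ _).
- exact: subv_trans (tens_spS (subvv S) sKB) (addvSr _ _).
have defI := dimv1_vpick HI; have defK := dimv1_vpick HK.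
set a := vpick I in defI; set b := vpick K in defK.
have a0 : a != 0 by rewrite vpick0 -dimv_eq0 HI.
have b0 : b != 0 by rewrite vpick0 -dimv_eq0 HK.
have abP : tens a b \in P.
  by apply: (subvP sIK_P); apply: memv_tens; apply: memv_pick.
have [[aS bB] | [bT aA]] := tens_in_sum_tens_sp HSphi HTchi a0 b0 abP.
  by left; split; [apply: dimv1_eq; rewrite // defI -memvE | rewrite defK -memvE].
by right; split; [apply: dimv1_eq; rewrite // defK -memvE | rewrite defI -memvE].
Qed.
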